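(* Let $n\ge3$, $A$ a commutative ring, $\alpha_k$ a simple root ($k\in\{2,2',3,\dots,n\}$), and $\omega\in PBr(D_n)$, viewed in $Br(D_n,A)$ via $y_\alpha\mapsto y_\alpha^0$. Then there exists $\omega'\in Br(D_n)$, independent of $a$, such that $y_k^a\,\omega=\omega'\,y_k^a$ in $Br(D_n,A)$ for all $a\in A$. Consequently, for every $k$ and every $a\in A$, the element $y_k^a(y_k^0)^{-1}\in Br(D_n,A)$ commutes with every element of $PBr(D_n)$.
   Context: Simple roots of $D_n$: $\alpha_i=-\epsilon_{i-1}+\epsilon_i$ ($2\le i\le n$), $\alpha_{2'}=\epsilon_1+\epsilon_2$; adjacent pairs are $\{2,3\},\{2',3\},\{k,k+1\}$ ($3\le k\le n-1$), ordered by $2<3<\dots<n$ and $2'<3$. Write $y_k^a=y_{\alpha_k}^a$. $Br(D_n,A)$ is generated by $y_k^a$ with relations for $a,b,c\in A$: $y_k^a y_k^0 y_k^b=y_k^0y_k^0y_k^{a+b}$; $y_k^ay_l^b=y_l^by_k^a$ for non-adjacent $k\ne l$; $y_k^ay_l^by_k^c=y_l^cy_k^{b+ac}y_l^a$ for adjacent $k<l$. $Br(D_n)=Br(D_n,0)$ (generators $y_k$, with commutation for non-adjacent and braid relations $y_ky_ly_k=y_ly_ky_l$ for adjacent pairs) is identified with the subgroup generated by the $y_k^0$; $PBr(D_n)$ is the kernel of $Br(D_n)\to W(D_n)$, $y_k\mapsto$ reflection $\sigma_{\alpha_k}$. *)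

From mathcomp Require Import all_boot all_order all_algebra.
Set Implicit Arguments. Unset Strict Implicit. Unset Printing Implicit Defensive.
Import GRing.Theory.
Local Open Scope ring_scope.

(* Dynkin diagram D_n.  Nodes are encoded by 'I_n:                           *)
(*   node 0      <-> alpha_{2'} = eps_1 + eps_2                              *)
(*   node j >= 1 <-> alpha_{j+1} = - eps_j + eps_{j+1}                       *)
(* (coordinates eps_1 .. eps_n are the indices 0 .. n-1).                    *)
(* Adjacent pairs {2,3},{2',3},{k,k+1} (3<=k<=n-1) become {1,2},{0,2},        *)
(* {j,j+1} (2<=j<=n-2); the paper's order 2<3<..<n, 2'<3 becomes the usual   *)
(* order on node indices restricted to adjacent pairs.                       *)

Definition node (n : nat) := 'I_n.

(* k and l adjacent with k < l in the paper's order *)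
Definition adj_lt (n : nat) (k l : node n) : bool :=
  ((0 < val k)%N && ((val k).+1 == val l)) || ((val k == 0%N) && (val l == 2%N)).

Definition adjacent (n : nat) (k l : node n) : bool := adj_lt k l || adj_lt l k.

Definition root_vec (n : nat) (k : node n) : 'rV[int]_n :=
  \row_(i < n)
    (if val k == 0%N then (if (val i == 0%N) || (val i == 1%N) then 1 else 0)
     else if val i == val k then 1
     else if (val i).+1 == val k then -1 else 0).

Definition refl_mx (n : nat) (k : node n) : 'M[int]_n :=
  1%:M - (root_vec k)^T *m root_vec k.

(* Br(D_n) : words in the generators y_k and their inverses.                 *)
(* A letter (k, false) is y_k, (k, true) is y_k^{-1}.                         *)
Definition artin_word (n : nat) := seq (node n * bool).

(* (sigma is an involution, so y_k^{-1} maps to sigma_{alpha_k} as well)     *)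
Definition weyl_image (n : nat) (w : artin_word n) : 'M[int]_n :=
  foldr (fun x acc => refl_mx x.1 *m acc) 1%:M w.

Definition in_PBr (n : nat) (w : artin_word n) : Prop := weyl_image w = 1%:M.

(* Br(D_n, A) : group given by generators y_k^a (k node, a in A) and the     *)
(* relations of the paper.  Elements are words of letters (k, a, inv);       *)
(* equality in the group is the congruence [br_eq] generated by free-group   *)
(* cancellation and the defining relations.                                  *)
Section BrA.
Variables (n : nat) (A : comPzRingType).

Definition letter := (node n * A * bool)%type.
Definition word := seq letter.

Definition y (k : node n) (a : A) : letter := (k, a, false).
Definition yinv (k : node n) (a : A) : letter := (k, a, true).

Inductive br_rel : word -> word -> Prop :=
  | rel_cancel_r (k : node n) (a : A) : br_rel [:: y k a; yinv k a] [::]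
  | rel_cancel_l (k : node n) (a : A) : br_rel [:: yinv k a; y k a] [::]
  | rel_1 (k : node n) (a b : A) :
      br_rel [:: y k a; y k 0; y k b] [:: y k 0; y k 0; y k (a + b)]
  | rel_comm (k l : node n) (a b : A) :
      k != l -> ~~ adjacent k l ->
      br_rel [:: y k a; y l b] [:: y l b; y k a]
  | rel_braid (k l : node n) (a b c : A) :
      adj_lt k l ->
      br_rel [:: y k a; y l b; y k c] [:: y l c; y k (b + a * c); y l a].

Inductive br_eq : word -> word -> Prop :=
  | br_step (u v r s : word) : br_rel r s -> br_eq (u ++ r ++ v) (u ++ s ++ v)
  | br_refl (w : word) : br_eq w w
  | br_sym (w1 w2 : word) : br_eq w1 w2 -> br_eq w2 w1
  | br_trans (w1 w2 w3 : word) : br_eq w1 w2 -> br_eq w2 w3 -> br_eq w1 w3.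

Definition embed (w : artin_word n) : word :=
  map (fun x : node n * bool => (x.1, (0 : A), x.2)) w.

End BrA.

(* Write z_k := y_k^a (y_k^0)^-1 and x^g := g^-1 x g.  To every root b = +-e_i +- e_j
   (i < j) of D_n we attach an element z_b of Br(D_n,A): for the four roots on e_1, e_2
   these are z_2', z_2, z_2^(y_2) and z_2'^(y_2'), and z_b is obtained from them by
   conjugating with y_3 ... y_j y_2 ... y_i.  A case analysis on the defining relations
   shows z_b^(y_m) = z_b^(y_m^-1) = z_(sigma_m b) for every node m.  Hence z_k^w equals
   z_(alpha_k w) for every braid w, which is z_k when w is pure.  For the first statement
   take w' := y_k w y_k^-1, again pure, and use y_k^a = z_k y_k^0. *)

From Pilot Require Import Defs.
From mathcomp Require Import all_boot all_order all_algebra zify.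
From mathcomp Require Import boolp.
From HB Require Import structures.
Set Implicit Arguments. Unset Strict Implicit. Unset Printing Implicit Defensive.
Import GRing.Theory.

(* [adj_lt] and [adjacent] of Defs, read on node indices. *)
Definition nat_adj_lt (p q : nat) : bool :=
  ((0 < p) && (p.+1 == q)) || ((p == 0) && (q == 2)).
Definition nat_adjacent (p q : nat) : bool := nat_adj_lt p q || nat_adj_lt q p.
Definition nonadjacent (p q : nat) : bool := (p != q) && ~~ nat_adjacent p q.

Ltac dynkin_lia := unfold nonadjacent, nat_adjacent, nat_adj_lt; lia.

Lemma nat_adjacent_sym p q : nat_adjacent p q = nat_adjacent q p.
Proof. by rewrite /nat_adjacent orbC. Qed.

Lemma nonadjacent_sym p q : nonadjacent p q = nonadjacent q p.
Proof. by rewrite /nonadjacent nat_adjacent_sym eq_sym. Qed.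

(** * Roots of D_n and the Weyl group action *)

(* [DRoot i j b0 b1], with [i < j], is the root [+-e_i +- e_j], the sign of [e_i] being [+]
   iff [b0].  Coordinates are numbered from 0 as in [root_vec], so node [0] is
   [DRoot 0 1 true true] and node [k > 0] is [DRoot k.-1 k false true]. *)
Record droot := DRoot { dlo : nat; dhi : nat; dlo_pos : bool; dhi_pos : bool }.

Definition droot_wf (N : nat) (r : droot) : bool := dlo r < dhi r < N.

(* The reflection at node [m > 0] swaps the coordinates [m - 1] and [m]; the one at
   node [0] maps [e_0] to [- e_1] and [e_1] to [- e_0]. *)
Definition droot_reflect (m : nat) (r : droot) : droot :=
  let: DRoot i j b0 b1 := r in
  if m == 0 then
    if (i == 0) && (j == 1) then DRoot 0 1 (~~ b1) (~~ b0)
    else if i == 0 then DRoot 1 j (~~ b0) b1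
    else if i == 1 then DRoot 0 j (~~ b0) b1
    else r
  else if (i.+1 == m) && (j == m) then DRoot i j b1 b0
  else if i == m then DRoot i.-1 j b0 b1
  else if i.+1 == m then DRoot m j b0 b1
  else if j == m then DRoot i j.-1 b0 b1
  else if j.+1 == m then DRoot i m b0 b1
  else r.

Lemma droot_reflect_wf N m r : m < N -> droot_wf N r -> droot_wf N (droot_reflect m r).
Proof.
rewrite /droot_wf; case: r => i j b0 b1 /= mN /andP[ij jN].
by repeat case: ifP => /= ?; lia.
Qed.

Lemma droot_reflectK N m r : droot_wf N r -> droot_reflect m (droot_reflect m r) = r.
Proof.
rewrite /droot_wf; case: r => i j b0 b1 /= /andP[ij jN].
by repeat (case: ifP => /= ?); rewrite ?negbK //; congr DRoot; lia.
Qed.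

Definition droot_act n (w : artin_word n) (r : droot) : droot :=
  foldl (fun r x => droot_reflect (x.1 : 'I_n) r) r w.

Definition simple_droot (k : nat) : droot :=
  if k == 0 then DRoot 0 1 true true else DRoot k.-1 k false true.

Lemma simple_droot_wf N k : 1 < N -> k < N -> droot_wf N (simple_droot k).
Proof. by rewrite /droot_wf /simple_droot; case: k => /=; lia. Qed.

Section WeylAction.
Local Open Scope ring_scope.

Definition sgnz (b : bool) : int := if b then 1 else -1.

Definition droot_coord (r : droot) (l : nat) : int :=
  (if l == dlo r then sgnz (dlo_pos r) else 0) + (if l == dhi r then sgnz (dhi_pos r) else 0).

Definition droot_vec (n : nat) (r : droot) : 'rV[int]_n := \row_(l < n) droot_coord r l.

(* The entries of [root_vec m]. *)
Definition root_coord (m l : nat) : int :=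
  if m == 0%N then (if (l == 0%N) || (l == 1%N) then 1 else 0)
  else if l == m then 1 else if l.+1 == m then -1 else 0.

Lemma droot_coord_reflect m r l : (dlo r < dhi r)%N ->
  droot_coord r l - root_coord m l *
    (root_coord m (dlo r) * sgnz (dlo_pos r) + root_coord m (dhi r) * sgnz (dhi_pos r))
  = droot_coord (droot_reflect m r) l.
Proof.
case: r => i j b0 b1 /= ij; rewrite /droot_reflect.
case: m => [|m] /=; repeat (case: eqP => ? /=; try (exfalso; lia)).
all: rewrite /droot_coord /root_coord /sgnz /=; case: b0; case: b1 => /=.
all: by repeat (case: eqP => ? /=; try (exfalso; lia)); lia.
Qed.

Lemma sum_pick n (a : int) (i : nat) (f : nat -> int) : (i < n)%N ->
  \sum_(k < n) (if (k : nat) == i then a else 0) * f k = f i * a.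
Proof.
move=> ilt; rewrite (bigD1 (Ordinal ilt)) //= eqxx big1 ?addr0 1?mulrC // => k.
by rewrite -val_eqE /= => /negPf ->; rewrite mul0r.
Qed.

Lemma droot_vec_reflect n (m : 'I_n) r : droot_wf n r ->
  droot_vec n r *m refl_mx m = droot_vec n (droot_reflect m r).
Proof.
move=> /andP[ij jn]; apply/rowP => l.
rewrite /refl_mx mulmxBr mulmx1 mulmxA !mxE big_ord1 !mxE -(droot_coord_reflect m l ij).
congr (_ - _); rewrite mulrC -/(root_coord m l); congr (_ * _).
under eq_bigr => k _ do rewrite !mxE -/(root_coord m k) /droot_coord mulrDl.
by rewrite big_split /= !sum_pick //; lia.
Qed.

Lemma droot_coord_neq0 i j b0 b1 l : (i < j)%N ->
  (droot_coord (DRoot i j b0 b1) l != 0) = (l == i) || (l == j).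
Proof.
move=> ij; rewrite /droot_coord /sgnz /=.
by case: (l =P i) => li; case: (l =P j) => lj; case: b0; case: b1 => //; lia.
Qed.

Lemma droot_vec_inj n r r' : droot_wf n r -> droot_wf n r' ->
  droot_vec n r = droot_vec n r' -> r = r'.
Proof.
case: r r' => i j b0 b1 [i' j' b0' b1'] /andP[/= ij jn] /andP[/= ij' jn'] /rowP E.
have F l : (l < n)%N -> droot_coord (DRoot i j b0 b1) l = droot_coord (DRoot i' j' b0' b1') l.
  by move=> ln; have := E (Ordinal ln); rewrite !mxE.
clear E; have S l : (l < n)%N -> ((l == i) || (l == j)) = ((l == i') || (l == j')).
  by move=> ln; rewrite -(droot_coord_neq0 b0 b1) // -(droot_coord_neq0 b0' b1') // F.
have := S _ jn; have := S _ (ltn_trans ij jn); have := S _ jn'.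
have := S _ (ltn_trans ij' jn'); rewrite !eqxx !orbT /= => hi' hj' hi hj.
have [ei ej] : i = i' /\ j = j' by move: ij ij' hi hj hi' hj'; clear; lia.
subst i' j'; have := F i (ltn_trans ij jn); have := F j jn; clear F S.
rewrite /droot_coord /sgnz /= !eqxx (gtn_eqF ij) (ltn_eqF ij).
by case: b0; case: b1; case: b0'; case: b1'.
Qed.

Lemma droot_act_wf n (w : artin_word n) r : droot_wf n r -> droot_wf n (droot_act w r).
Proof. by elim: w r => //= x w IH r wr; apply/IH/droot_reflect_wf. Qed.

Lemma droot_vec_act n (w : artin_word n) r : droot_wf n r ->
  droot_vec n r *m weyl_image w = droot_vec n (droot_act w r).
Proof.
elim: w r => [|x w IH] r wr /=; first by rewrite mulmx1.
by rewrite mulmxA droot_vec_reflect // IH // droot_reflect_wf.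
Qed.

Lemma droot_act_pure n (w : artin_word n) r : in_PBr w -> droot_wf n r ->
  droot_act w r = r.
Proof.
move=> pw wr; apply: (@droot_vec_inj n) => //; first exact: droot_act_wf.
by rewrite -droot_vec_act // pw mulmx1.
Qed.

Lemma droot_act_conj n (w : artin_word n) (k : node n) b b' r :
  in_PBr w -> droot_wf n r -> droot_act ((k, b) :: w ++ [:: (k, b')]) r = r.
Proof.
move=> pw wr; rewrite /droot_act /= foldl_cat -/(droot_act w _) droot_act_pure //.
  by rewrite /= (droot_reflectK _ wr).
exact: droot_reflect_wf.
Qed.

End WeylAction.

(** * Conjugation in groups *)

Local Open Scope group_scope.

Section ConjugationFacts.
Variable G : groupType.
Implicit Types c g x y : G.

Lemma conjg_eq x g y : x * g = g * y -> x ^ g = y.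
Proof. by move=> E; apply: (mulgI g); rewrite -conjgC. Qed.

Lemma commute_conjg_fix x g : commute x g -> x ^ g = x.
Proof. by move/commgP/conjg_fixP. Qed.

Lemma conjg_fix_commute x g : x ^ g = x -> commute x g.
Proof. by move=> E; apply/commgP/conjg_fixP. Qed.

Lemma conjVg_sq x g : commute x (g ^+ 2) -> x ^ g^-1 = x ^ g.
Proof. by move/commute_conjg_fix => {1}<-; rewrite -conjgM expg2 mulgK. Qed.

Lemma commute_conjgJ c x g : commute (c ^ g) (x ^ g) <-> commute c x.
Proof.
rewrite /commute -!conjMg; split=> [/conjg_inj // | -> //].
Qed.

Lemma commute_conjgl x g c : commute (x ^ g) c <-> commute x (c ^ g^-1).
Proof. by rewrite -(commute_conjgJ x (c ^ g^-1) g) conjgKV. Qed.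

Lemma conj_swap x g h : commute g h -> commute x (g ^+ 2) -> commute x (h ^+ 2) ->
  x ^ (g^-1 * h) = x ^ (h^-1 * g).
Proof.
by move=> gh xg xh; rewrite !conjgM !conjVg_sq // -!conjgM gh.
Qed.

Lemma commute_conjg c x g : commute c x -> commute c g -> commute c (x ^ g).
Proof.
move=> cx cg; rewrite -(commute_conjg_fix cg) commute_conjgJ //.
Qed.

Lemma commute_mulgCA x y w : commute x y -> x * (y * w) = y * (x * w).
Proof. by move=> xy; rewrite !mulgA xy. Qed.

Lemma commute_conjg_shift x t g g' : g' * t = t * g -> commute x g' ->
  commute (x ^ t) g.
Proof.
move=> tg xg'; apply: conjg_fix_commute.
by rewrite -conjgM -[t * g]tg conjgM (commute_conjg_fix xg').
Qed.

Lemma commute_div_conj x g t : commute (x / g) (g * t / g) -> x * t = g * t / g * x.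
Proof.
move=> xt; have -> : x * t = x / g * (g * t / g) * g by rewrite !mulgA !mulgVK.
by rewrite xt -mulgA mulgVK.
Qed.

End ConjugationFacts.

(** * Root elements *)

(* For a fixed [a], [y0 p] and [ya p] play the roles of [y_p^0] and [y_p^a]; the
   hypotheses are the instances of the defining relations that are used: the braid
   relation with (a,b,c) = (0,0,0), (0,0,a) or (a,0,0), (0,a,0), and the first relation
   with b = 0. *)
Section RootElements.
Variables (G : groupType) (N : nat) (y0 ya : nat -> G).
Hypothesis N2 : (2 < N)%N.
Hypothesis y0_comm : forall p q, (p < N)%N -> (q < N)%N -> nonadjacent p q ->
  commute (y0 p) (y0 q).
Hypothesis ya_comm : forall p q, (p < N)%N -> (q < N)%N -> nonadjacent p q ->
  commute (ya p) (y0 q).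
Hypothesis y0_braid : forall p q, (p < N)%N -> (q < N)%N -> nat_adjacent p q ->
  y0 p * y0 q * y0 p = y0 q * y0 p * y0 q.
Hypothesis ya_comm_sq : forall p, (p < N)%N -> commute (ya p) (y0 p ^+ 2).
Hypothesis ya_braid_out : forall p q, (p < N)%N -> (q < N)%N -> nat_adjacent p q ->
  y0 p * y0 q * ya p = ya q * y0 p * y0 q.
Hypothesis ya_braid_mid : forall p q, (p < N)%N -> (q < N)%N -> nat_adjacent p q ->
  y0 p * ya q * y0 p = y0 q * ya p * y0 q.

Definition yratio p := ya p / y0 p.

Section Adjacent.
Variables p q : nat.
Hypotheses (pN : (p < N)%N) (qN : (q < N)%N) (pq : nat_adjacent p q).

Lemma y0_conj_adj : y0 q ^ (y0 p * y0 q) = y0 p.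
Proof. by apply: conjg_eq; rewrite !mulgA y0_braid. Qed.

Lemma ya_conj_adj : ya q ^ (y0 p * y0 q) = ya p.
Proof. by apply: conjg_eq; rewrite mulgA ya_braid_out. Qed.

Lemma yratio_conj_adj : yratio q ^ (y0 p * y0 q) = yratio p.
Proof. by rewrite conjMg conjVg y0_conj_adj ya_conj_adj. Qed.

Lemma y0_conjV_adj : y0 p ^ y0 q = y0 q ^ (y0 p)^-1.
Proof.
apply: conjg_eq; apply: (mulIg (y0 p)).
by rewrite conjgE invgK !mulgA mulgVK y0_braid.
Qed.
End Adjacent.

Lemma yratio_comm_sq_adj p q : (p < N)%N -> (q < N)%N -> nat_adjacent p q ->
  commute (yratio p) (y0 q ^+ 2).
Proof.
move=> pN qN pq; have qp : nat_adjacent q p by rewrite nat_adjacent_sym.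
have key : y0 q ^+ 2 * ya p = ya p * (y0 q ^+ 2) ^ y0 p.
  rewrite conjXg (y0_conjV_adj qN pN qp) -conjXg conjgE invgK.
  apply: (mulIg (y0 q)).
  rewrite !mulgA mulgVK !expg2 -!mulgA [y0 q * (ya p * _)]mulgA.
  by rewrite ya_braid_mid // !mulgA ya_braid_out.
by rewrite /yratio /commute [RHS]mulgA key conjgE !mulgA mulgK.
Qed.

Lemma yratio_comm p q : (p < N)%N -> (q < N)%N -> nonadjacent p q ->
  commute (yratio p) (y0 q).
Proof.
move=> pN qN pq; apply/commute_sym/commuteM; first exact/commute_sym/ya_comm.
by apply/commuteV/y0_comm; rewrite // nonadjacent_sym.
Qed.

Lemma yratio_comm_sq p : (p < N)%N -> commute (yratio p) (y0 p ^+ 2).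
Proof.
move=> pN; apply/commute_sym/commuteM; first exact/commute_sym/ya_comm_sq.
by apply/commuteV/commute_sym/commuteX.
Qed.

Lemma yratio_conjV_adj p q : (p < N)%N -> (q < N)%N -> nat_adjacent p q ->
  yratio q ^ y0 p = yratio p ^ (y0 q)^-1.
Proof. by move=> pN qN pq; rewrite -(yratio_conj_adj pN qN pq) conjgM conjgK. Qed.

Lemma y0sq_conjV_adj p q : (p < N)%N -> (q < N)%N -> nat_adjacent p q ->
  (y0 q ^+ 2) ^ (y0 p)^-1 = (y0 p ^+ 2) ^ y0 q.
Proof. by move=> pN qN pq; rewrite !conjXg y0_conjV_adj. Qed.

Lemma yratio_neg_comm_sq_adj p q : (p < N)%N -> (q < N)%N -> nat_adjacent p q ->
  commute (yratio p ^ y0 p) (y0 q ^+ 2).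
Proof.
move=> pN qN pq; have qp : nat_adjacent q p by rewrite nat_adjacent_sym.
rewrite commute_conjgl (y0sq_conjV_adj pN qN pq); apply/commute_sym.
rewrite commute_conjgl (conjVg_sq (yratio_comm_sq_adj pN qN pq)).
rewrite (yratio_conjV_adj qN pN qp); apply/commute_sym.
rewrite commute_conjgl invgK conjXg conjgE mulKg; exact: yratio_comm_sq_adj.
Qed.

Lemma yratio_neg_conj_adj p r : (p < N)%N -> (r < N)%N -> nat_adjacent p r ->
  (yratio p ^ y0 p) ^ y0 r = (yratio r ^ y0 r) ^ (y0 p)^-1.
Proof.
move=> pN rN pr; have rp : nat_adjacent r p by rewrite nat_adjacent_sym.
rewrite -(conjVg_sq (yratio_comm_sq pN)) -(conjVg_sq (yratio_comm_sq rN)).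
rewrite -(yratio_conj_adj rN pN rp) -!conjgM; congr (_ ^ _).
apply: (mulIg (y0 p)); apply: (mulIg (y0 r)); apply: (mulgI (y0 p)).
by rewrite !mulgA mulgV mul1g !mulgVK y0_braid.
Qed.

Section Star.
Variables p q r : nat.
Hypotheses (pN : (p < N)%N) (qN : (q < N)%N) (rN : (r < N)%N).
Hypotheses (pq : nonadjacent p q) (pr : nat_adjacent p r) (qr : nat_adjacent q r).
Let rp : nat_adjacent r p. Proof. by rewrite nat_adjacent_sym. Qed.
Let rq : nat_adjacent r q. Proof. by rewrite nat_adjacent_sym. Qed.
Let y0pq : commute (y0 p) (y0 q). Proof. exact: y0_comm. Qed.
Let y0sqqV : commute (y0 p ^+ 2) (y0 q)^-1.
Proof. exact/commuteV/commute_sym/commuteX/commute_sym. Qed.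
Let y0sqpV : commute (y0 p ^+ 2) (y0 p)^-1.
Proof. exact/commuteV/commute_sym/commuteX. Qed.

Lemma yratio_conj_star : yratio p ^ (y0 r * y0 q) = yratio q ^ (y0 r * y0 p).
Proof.
rewrite !conjgM (yratio_conjV_adj rN pN rp) (yratio_conjV_adj rN qN rq) -!conjgM.
by apply: conj_swap => //; apply: yratio_comm_sq_adj.
Qed.

Lemma yratio_neg_conj_star :
  (yratio p ^ y0 p) ^ (y0 r * y0 q) = (yratio q ^ y0 q) ^ (y0 r * y0 p).
Proof.
rewrite !conjgM (yratio_neg_conj_adj pN rN pr) (yratio_neg_conj_adj qN rN qr).
by rewrite -!(conjgM (yratio r ^ y0 r)); apply: conj_swap => //; apply: yratio_neg_comm_sq_adj.
Qed.

Lemma star_comm_sq :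
  [/\ commute (yratio p ^ y0 r) (y0 p ^+ 2), commute (yratio q ^ y0 r) (y0 p ^+ 2),
      commute ((yratio p ^ y0 p) ^ y0 r) (y0 p ^+ 2)
    & commute ((yratio q ^ y0 q) ^ y0 r) (y0 p ^+ 2)].
Proof.
have zr : commute (y0 p ^+ 2) (yratio r) by apply/commute_sym/yratio_comm_sq_adj.
have nzr : commute (y0 p ^+ 2) (yratio r ^ y0 r).
  exact/commute_sym/yratio_neg_comm_sq_adj.
rewrite (yratio_conjV_adj rN pN rp) (yratio_conjV_adj rN qN rq).
rewrite (yratio_neg_conj_adj pN rN pr) (yratio_neg_conj_adj qN rN qr).
by split; apply/commute_sym/commute_conjg.
Qed.

End Star.

Lemma comm_sq_conj_adj x p q : (p < N)%N -> (q < N)%N -> nat_adjacent p q ->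
  commute x (y0 q) -> commute x (y0 p ^+ 2) -> commute (x ^ y0 p) (y0 q ^+ 2).
Proof.
move=> pN qN pq xq xp; rewrite commute_conjgl (y0sq_conjV_adj pN qN pq).
exact: commute_conjg.
Qed.

Let N0 : (0 < N)%N. Proof. lia. Qed.
Let N1 : (1 < N)%N. Proof. lia. Qed.
Let adj02 : nat_adjacent 0 2. Proof. by []. Qed.
Let adj12 : nat_adjacent 1 2. Proof. by []. Qed.
Let nadj01 : nonadjacent 0 1. Proof. by []. Qed.
Let nadj10 : nonadjacent 1 0. Proof. by []. Qed.

Definition base_elt (b0 b1 : bool) : G :=
  match b0, b1 with
  | true, true => yratio 0
  | false, true => yratio 1
  | true, false => yratio 1 ^ y0 1
  | false, false => yratio 0 ^ y0 0
  end.

Lemma base_conj1 b0 b1 : base_elt b0 b1 ^ y0 1 = base_elt b1 b0.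
Proof.
have z01 : commute (yratio 0) (y0 1) by apply: yratio_comm.
case: b0; case: b1 => //=; first exact: commute_conjg_fix.
- by rewrite -conjgM -expg2 commute_conjg_fix //; apply: yratio_comm_sq.
- by rewrite -conjgM (y0_comm N0 N1) // conjgM (commute_conjg_fix z01).
Qed.

Lemma base_conj0 b0 b1 : base_elt b0 b1 ^ y0 0 = base_elt (~~ b1) (~~ b0).
Proof.
have z10 : commute (yratio 1) (y0 0) by apply: yratio_comm.
case: b0; case: b1 => //=.
- by rewrite -conjgM (y0_comm N1 N0) // conjgM (commute_conjg_fix z10).
- exact: commute_conjg_fix.
- by rewrite -conjgM -expg2 commute_conjg_fix //; apply: yratio_comm_sq.
Qed.

Lemma base_comm b0 b1 m : (2 < m < N)%N -> commute (base_elt b0 b1) (y0 m).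
Proof.
move=> /andP[m2 mN].
have z0 : commute (yratio 0) (y0 m) by apply: yratio_comm => //; dynkin_lia.
have z1 : commute (yratio 1) (y0 m) by apply: yratio_comm => //; dynkin_lia.
have s0 : commute (y0 m) (y0 0) by apply: y0_comm => //; dynkin_lia.
have s1 : commute (y0 m) (y0 1) by apply: y0_comm => //; dynkin_lia.
by case: b0; case: b1 => //=; apply/commute_sym/commute_conjg => //; apply/commute_sym.
Qed.

Lemma base_conj20 b0 b1 :
  base_elt b0 b1 ^ (y0 2 * y0 0) = base_elt (~~ b0) b1 ^ (y0 2 * y0 1).
Proof.
case: b0; case: b1 => /=.
- by rewrite !yratio_conj_adj.
- exact: yratio_neg_conj_star.
- exact: yratio_conj_star.
- by rewrite !conjgM !yratio_neg_conj_adj // -!conjgM !mulVg.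
Qed.

Lemma base_comm_sq2 b0 b1 : commute (base_elt b0 b1) (y0 2 ^+ 2).
Proof.
by case: b0; case: b1 => /=;
  [apply: yratio_comm_sq_adj | apply: yratio_neg_comm_sq_adj
  | apply: yratio_comm_sq_adj | apply: yratio_neg_comm_sq_adj].
Qed.

Lemma base_conj2_comm_sq b0 b1 p : (p < 2)%N ->
  commute (base_elt b0 b1 ^ y0 2) (y0 p ^+ 2).
Proof.
case: p => [|[|//]] _.
  by have [] := star_comm_sq N0 N1 N2 nadj01 adj02 adj12; case: b0; case: b1.
by have [] := star_comm_sq N1 N0 N2 nadj10 adj12 adj02; case: b0; case: b1.
Qed.

Definition sprod (l r : nat) : G := \prod_(l <= i < r) y0 i.
Arguments sprod (l r)%_N.

Lemma sprod_recr l r : (l <= r)%N -> sprod l r.+1 = sprod l r * y0 r.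
Proof. exact: big_nat_recr. Qed.

Lemma sprod_recl l r : (l < r)%N -> sprod l r = y0 l * sprod l.+1 r.
Proof. exact: big_ltn. Qed.

Lemma sprod_comm m l r : (m < N)%N -> (r <= N)%N ->
  (forall i, (l <= i < r)%N -> nonadjacent m i) -> commute (y0 m) (sprod l r).
Proof.
move=> mN rN mlr; rewrite /sprod big_seq; apply: commute_prod => i.
by rewrite mem_index_iota => ilr; apply: y0_comm (mlr _ ilr); lia.
Qed.

Lemma sprod_shift l m r : (0 < l <= m)%N -> (m.+1 < r <= N)%N ->
  sprod l r * y0 m = y0 m.+1 * sprod l r.
Proof.
move=> lm /andP[]; elim: r => // r IH mr rN.
have [rm|mr'] := eqVneq r m.+1.
  rewrite rm !sprod_recr; try lia.
  rewrite -!mulgA (mulgA (y0 m)) y0_braid; try dynkin_lia.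
  rewrite !mulgA; congr (_ * _ * _).
  by apply/esym/sprod_comm => *; dynkin_lia.
rewrite sprod_recr; last lia.
rewrite -mulgA (y0_comm (q := m)); try dynkin_lia.
by rewrite mulgA IH; try lia; rewrite mulgA.
Qed.

(* [base_elt b0 b1] is attached to [DRoot 0 1 b0 b1]; conjugation by
   [y_2 ... y_j * y_1 ... y_i] moves [e_1] to [e_j], then [e_0] to [e_i]. *)
Definition root_elt (r : droot) : G :=
  base_elt (dlo_pos r) (dhi_pos r) ^ (sprod 2 (dhi r).+1 * sprod 1 (dlo r).+1).

Local Notation R i j b0 b1 := (root_elt (DRoot i j b0 b1)).

Lemma root_conj_lo_up i j b0 b1 : (i.+1 < j)%N -> R i j b0 b1 ^ y0 i.+1 = R i.+1 j b0 b1.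
Proof. by move=> ij; rewrite /root_elt /= -conjgM -mulgA -sprod_recr. Qed.

Lemma root_conj_hi_up i j b0 b1 : (i < j)%N -> (j.+1 < N)%N ->
  R i j b0 b1 ^ y0 j.+1 = R i j.+1 b0 b1.
Proof.
move=> ij jN; rewrite /root_elt /= -conjgM -mulgA -(sprod_comm (m := j.+1)); try lia.
  by rewrite mulgA -sprod_recr //; lia.
by move=> *; dynkin_lia.
Qed.

Lemma sprod_conj_adj i : (i.+1 < N)%N ->
  sprod 2 i.+2 * sprod 1 i.+1 * y0 i.+1 = y0 1 * (sprod 2 i.+2 * sprod 1 i.+1).
Proof.
elim: i => [|i IH] iN; first by rewrite /sprod !big_geq // !mul1g mulg1.
have yS : commute (y0 i.+2) (sprod 1 i.+1) by apply: sprod_comm => *; dynkin_lia.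
rewrite [sprod 2 i.+3]sprod_recr // [sprod 1 i.+2]sprod_recr // -!mulgA.
rewrite !(commute_mulgCA _ yS) [y0 i.+2 * _]mulgA y0_braid; try dynkin_lia.
by rewrite !mulgA IH; try lia; rewrite !mulgA.
Qed.

Lemma root_conj_swap i b0 b1 : (i.+1 < N)%N ->
  R i i.+1 b0 b1 ^ y0 i.+1 = R i i.+1 b1 b0.
Proof. by move=> iN; rewrite /root_elt /= -conjgM sprod_conj_adj // conjgM base_conj1. Qed.

Lemma root_comm_far i j b0 b1 m : (i < j < N)%N -> (0 < m < N)%N ->
  m \notin [:: i; i.+1; j; j.+1] -> commute (R i j b0 b1) (y0 m).
Proof.
rewrite !inE => /andP[ij jN] /andP[m0 mN] mij.
suff [m' m'N shift] : exists2 m', (2 < m' < N)%N &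
    y0 m' * (sprod 2 j.+1 * sprod 1 i.+1) = sprod 2 j.+1 * sprod 1 i.+1 * y0 m.
  by apply: commute_conjg_shift shift _; apply: base_comm.
have y0V k : (i.+1 < k < N)%N -> commute (y0 k) (sprod 1 i.+1).
  by move=> /andP[ik kN]; apply: sprod_comm => *; dynkin_lia.
have [jm|mj] := ltnP j.+1 m.
  have y0U : commute (y0 m) (sprod 2 j.+1) by apply: sprod_comm => *; dynkin_lia.
  exists m; first lia.
  by rewrite mulgA y0U -!mulgA y0V //; lia.
have [im|mi] := ltnP i.+1 m.
  exists m.+1; first lia.
  by rewrite -[RHS]mulgA -y0V ?mulgA ?sprod_shift //; lia.
exists m.+2; first lia.
by rewrite -mulgA sprod_shift ?mulgA ?sprod_shift //; lia.
Qed.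

Lemma root0_comm_sq p j b0 b1 : (p < 2)%N -> (1 < j < N)%N ->
  commute (R 0 j b0 b1) (y0 p ^+ 2).
Proof.
move=> p2 /andP[j1 jN]; rewrite /root_elt /= [sprod 1 1]big_geq // mulg1.
rewrite sprod_recl // conjgM; apply/commute_sym/commute_conjg.
  exact/commute_sym/base_conj2_comm_sq.
by apply/commute_sym/commuteX/commute_sym/sprod_comm => *; dynkin_lia.
Qed.

Lemma root_comm_sq_lo i j b0 b1 : (i.+1 < j < N)%N ->
  commute (R i j b0 b1) (y0 i.+1 ^+ 2).
Proof.
elim: i => [|i IH] /andP[ij jN]; first by apply: root0_comm_sq; lia.
rewrite -root_conj_lo_up; last lia.
apply: comm_sq_conj_adj; try dynkin_lia.
  by apply: root_comm_far; rewrite ?inE; lia.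
by apply: IH; lia.
Qed.

Lemma root_conj_lo_down i j b0 b1 : (i.+1 < j < N)%N ->
  R i.+1 j b0 b1 ^ y0 i.+1 = R i j b0 b1.
Proof.
move=> ijN; rewrite -root_conj_lo_up; last lia.
by rewrite -conjgM -expg2 commute_conjg_fix //; apply: root_comm_sq_lo.
Qed.

Lemma base_comm_sq_sprod k b0 b1 : (1 < k < N)%N ->
  commute (base_elt b0 b1 ^ sprod 2 k) (y0 k ^+ 2).
Proof.
elim: k => // k IH /andP[k1 kN].
have [->|k2] := eqVneq k 1%N; first by rewrite /sprod big_geq // conjg1; apply: base_comm_sq2.
rewrite sprod_recr; last lia.
rewrite conjgM; apply: comm_sq_conj_adj; try dynkin_lia.
  apply/commute_sym/commute_conjg; first by apply/commute_sym/base_comm; lia.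
  by apply: sprod_comm => *; dynkin_lia.
by apply: IH; lia.
Qed.

Lemma root_comm_sq_hi i j b0 b1 : (i < j)%N -> (j.+1 < N)%N ->
  commute (R i j b0 b1) (y0 j.+1 ^+ 2).
Proof.
move=> ij jN; rewrite /root_elt /= conjgM; apply/commute_sym/commute_conjg.
  by apply/commute_sym/base_comm_sq_sprod; lia.
by apply/commute_sym/commuteX/commute_sym/sprod_comm => *; dynkin_lia.
Qed.

Lemma root_conj_hi_down i j b0 b1 : (i < j)%N -> (j.+1 < N)%N ->
  R i j.+1 b0 b1 ^ y0 j.+1 = R i j b0 b1.
Proof.
move=> ij jN; rewrite -root_conj_hi_up //.
by rewrite -conjgM -expg2 commute_conjg_fix //; apply: root_comm_sq_hi.
Qed.

Lemma root_conj0_01 b0 b1 : R 0 1 b0 b1 ^ y0 0 = R 0 1 (~~ b1) (~~ b0).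
Proof. by rewrite /root_elt /= /sprod !big_geq // mulg1 !conjg1 base_conj0. Qed.

Lemma root_conj0_lo0 j b0 b1 : (1 < j < N)%N -> R 0 j b0 b1 ^ y0 0 = R 1 j (~~ b0) b1.
Proof.
move=> /andP[j1 jN]; rewrite /root_elt /= sprod_recl // [sprod 1 2]sprod_recr //.
have y0S k : (k < 2)%N -> commute (y0 k) (sprod 3 j.+1).
  by move=> k2; apply: sprod_comm => *; dynkin_lia.
rewrite [sprod 1 1]big_geq // mulg1 mul1g -conjgM -!mulgA -(y0S 0) //.
by rewrite -(y0S 1%N) // !mulgA !(conjgM _ _ (sprod 3 j.+1)) base_conj20.
Qed.

Lemma root_conj0_lo1 j b0 b1 : (1 < j < N)%N -> R 1 j b0 b1 ^ y0 0 = R 0 j (~~ b0) b1.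
Proof.
move=> jN; rewrite -{1}(negbK b0) -root_conj0_lo0 //.
by rewrite -conjgM -expg2 commute_conjg_fix //; apply: root0_comm_sq.
Qed.

Lemma root_comm0 i j b0 b1 : (1 < i < j)%N -> (j < N)%N -> commute (R i j b0 b1) (y0 0).
Proof.
move=> /andP[i1 ij] jN.
have -> : R i j b0 b1 = (R 1 j b0 b1 ^ y0 2) ^ sprod 3 i.+1.
  have [i1' i2] : (1 < i.+1)%N /\ (2 < i.+1)%N by lia.
  rewrite /root_elt /= -!conjgM (sprod_recl i1') (sprod_recl i2).
  by rewrite [sprod 1 2]sprod_recr // [sprod 1 1]big_geq // mul1g !mulgA.
apply/commute_sym/commute_conjg; last by apply: sprod_comm => *; dynkin_lia.
rewrite -{1}(negbK b0) -root_conj0_lo0; last lia.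
set X := R 0 j (~~ b0) b1.
have X2 : commute X (y0 2) by apply: root_comm_far; rewrite ?inE; lia.
apply/commute_sym/conjg_fix_commute.
rewrite -!(conjgM X) y0_braid; try dynkin_lia.
by rewrite !(conjgM X) (commute_conjg_fix X2).
Qed.

Lemma root_elt_reflect m r : (m < N)%N -> droot_wf N r ->
  root_elt r ^ y0 m = root_elt (droot_reflect m r).
Proof.
rewrite /droot_wf; case: r => i j b0 b1 /= mN /andP[ij jN].
case: m mN => [|m] mN /=.
  case: ifP => [/andP[/eqP-> /eqP->] | h01]; first exact: root_conj0_01.
  case: eqP => [i0 | i0]; first by subst i; apply: root_conj0_lo0; lia.
  case: eqP => [i1 | i1]; first by subst i; apply: root_conj0_lo1; lia.
  by apply: commute_conjg_fix; apply: root_comm0; lia.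
case: ifP => [/andP[/eqP[->] /eqP->] | hsw]; first exact: root_conj_swap.
case: eqP => [im | im]; first by subst i; apply: root_conj_lo_down; lia.
case: eqP => [im' | im']; first by have -> : m = i by [lia]; apply: root_conj_lo_up; lia.
case: eqP => [jm | jm]; first by subst j; apply: root_conj_hi_down; lia.
case: eqP => [jm' | jm']; first by have -> : m = j by [lia]; apply: root_conj_hi_up; lia.
by apply: commute_conjg_fix; apply: root_comm_far; rewrite ?inE; lia.
Qed.

Lemma root_elt_reflectV m r : (m < N)%N -> droot_wf N r ->
  root_elt r ^ (y0 m)^-1 = root_elt (droot_reflect m r).
Proof.
move=> mN wr; rewrite -{1}(droot_reflectK m wr) -root_elt_reflect ?conjgK //.
exact: droot_reflect_wf.
Qed.

Definition word_elt (w : artin_word N) : G :=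
  \prod_(x <- w) (if x.2 then (y0 (x.1 : 'I_N))^-1 else y0 (x.1 : 'I_N)).

Lemma root_elt_act w r : droot_wf N r -> root_elt r ^ word_elt w = root_elt (droot_act w r).
Proof.
elim: w r => [|x w IH] r wr; first by rewrite /word_elt big_nil conjg1.
rewrite /word_elt big_cons conjgM -/(word_elt w) /= -IH; last exact: droot_reflect_wf.
by case: x.2; rewrite ?root_elt_reflectV ?root_elt_reflect.
Qed.

Lemma root_elt_simple k : (k < N)%N -> root_elt (simple_droot k) = yratio k.
Proof.
case: k => [|k] kN; first by rewrite /root_elt /sprod /= !big_geq // mulg1 conjg1.
elim: k kN => [|k IH] kN; first by rewrite /root_elt /sprod /= !big_geq // mulg1 conjg1.
rewrite /simple_droot /= in IH *.
rewrite -root_conj_lo_up // -root_conj_hi_up // IH; try lia.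
by rewrite -conjgM yratio_conj_adj //; dynkin_lia.
Qed.

Lemma yratio_commute_word k w : (k < N)%N ->
  droot_act w (simple_droot k) = simple_droot k -> commute (yratio k) (word_elt w).
Proof.
move=> kN fix_k; apply: conjg_fix_commute.
by rewrite -root_elt_simple // root_elt_act ?fix_k // simple_droot_wf.
Qed.

End RootElements.

(** * The group Br(D_n, A) *)

Section BraidWords.
Variables (n : nat) (A : comPzRingType).
Local Notation word := (word n A).

Lemma br_ctx (p q u v : word) : br_eq u v -> br_eq (p ++ u ++ q) (p ++ v ++ q).
Proof.
elim=> [u0 v0 r s rs | w | w1 w2 _ IH | w1 w2 w3 _ IH1 _ IH2].
- by have := br_step (p ++ u0) (v0 ++ q) rs; rewrite -!catA.
- exact: br_refl.
- exact: br_sym.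
- exact: br_trans IH1 IH2.
Qed.

Lemma br_cat (u u' v v' : word) : br_eq u u' -> br_eq v v' -> br_eq (u ++ v) (u' ++ v').
Proof.
move=> uu vv; apply: (br_trans (w2 := u' ++ v)).
  by have := br_ctx [::] v uu.
by have := br_ctx u' [::] vv; rewrite !cats0.
Qed.

Lemma br_relE (r s : word) : br_rel r s -> br_eq r s.
Proof. by move=> rs; have := br_step [::] [::] rs; rewrite /= !cats0. Qed.

Definition letter_inv (x : letter n A) : letter n A := (x.1, ~~ x.2).
Definition word_inv (w : word) : word := rev (map letter_inv w).

Lemma word_invK : involutive word_inv.
Proof.
move=> w; rewrite /word_inv map_rev revK -map_comp -[RHS]map_id.
by apply: eq_map => -[[k c] b]; rewrite /letter_inv /= negbK.
Qed.

Lemma br_cat_inv (w : word) : br_eq (w ++ word_inv w) [::].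
Proof.
elim: w => [|x w IH]; first exact: br_refl.
rewrite /word_inv /= rev_cons -cats1 -/(word_inv w).
rewrite -[x :: _]cat1s (catA w).
apply: br_trans (br_ctx _ _ IH) _ => /=.
by case: x => -[k c] [] /=; apply: br_relE; constructor.
Qed.

Lemma br_inv_cat (w : word) : br_eq (word_inv w ++ w) [::].
Proof. by have := br_cat_inv (word_inv w); rewrite word_invK. Qed.

Lemma br_word_inv (u v : word) : br_eq u v -> br_eq (word_inv u) (word_inv v).
Proof.
move=> uv; apply: (br_trans (w2 := word_inv u ++ (u ++ word_inv v))).
  have := br_ctx (word_inv u) [::] (br_trans (br_cat uv (br_refl _)) (br_cat_inv v)).
  by rewrite !cats0 => /br_sym.
by rewrite catA; have := br_ctx [::] (word_inv v) (br_inv_cat u).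
Qed.

End BraidWords.

Section BraidGroup.
Variables (n : nat) (A : comPzRingType).
Local Open Scope quotient_scope.
Local Notation word := (word n A).

(* [br_eq] is not decidable, so the quotient is taken by its classical boolean reflection. *)
Definition br_eqb : rel word := fun u v => `[< br_eq u v >].

Lemma br_eqb_refl : reflexive br_eqb.
Proof. by move=> u; apply/asboolP/br_refl. Qed.

Lemma br_eqb_sym : symmetric br_eqb.
Proof. by move=> u v; apply/asboolP/asboolP => /br_sym. Qed.

Lemma br_eqb_trans : transitive br_eqb.
Proof. by move=> v u w /asboolP uv /asboolP vw; apply/asboolP/(br_trans uv vw). Qed.

Canonical br_eqb_equiv := EquivRel br_eqb br_eqb_refl br_eqb_sym br_eqb_trans.

Definition BrA := {eq_quot br_eqb}.
HB.instance Definition _ := EqQuotient.on BrA.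
HB.instance Definition _ := Choice.on BrA.

Lemma pi_br_eq u v : \pi_BrA u = \pi_BrA v <-> br_eq u v.
Proof. by split=> [/(eqmodP br_eqb_equiv)/asboolP | /asboolP/(eqmodP br_eqb_equiv)]. Qed.

Lemma repr_br u : br_eq (repr (\pi_BrA u)) u.
Proof. by apply/pi_br_eq; rewrite reprK. Qed.

Definition br_mul := lift_op2 BrA cat.
Definition br_inv := lift_op1 BrA (@word_inv n A).
Definition br_one := lift_cst BrA [::].

Lemma br_mulE u v : br_mul (\pi_BrA u) (\pi_BrA v) = \pi_BrA (u ++ v).
Proof. by unlock br_mul; apply/pi_br_eq/br_cat; apply: repr_br. Qed.

Lemma br_invE u : br_inv (\pi_BrA u) = \pi_BrA (word_inv u).
Proof. by unlock br_inv; apply/pi_br_eq/br_word_inv/repr_br. Qed.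

Lemma br_oneE : br_one = \pi_BrA [::].
Proof. by unlock br_one. Qed.

Lemma br_mulA : associative br_mul.
Proof.
elim/quotW=> u; elim/quotW=> v; elim/quotW=> w.
by rewrite !br_mulE catA.
Qed.

Lemma br_mul1g : left_id br_one br_mul.
Proof. by elim/quotW=> u; rewrite br_oneE br_mulE. Qed.

Lemma br_mulg1 : right_id br_one br_mul.
Proof. by elim/quotW=> u; rewrite br_oneE br_mulE cats0. Qed.

Lemma br_mulVg : left_inverse br_one br_inv br_mul.
Proof. by elim/quotW=> u; rewrite br_invE br_mulE br_oneE; apply/pi_br_eq/br_inv_cat. Qed.

Lemma br_mulgV : right_inverse br_one br_inv br_mul.
Proof. by elim/quotW=> u; rewrite br_invE br_mulE br_oneE; apply/pi_br_eq/br_cat_inv. Qed.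

HB.instance Definition _ :=
  isGroup.Build BrA br_mulA br_mul1g br_mulg1 br_mulVg br_mulgV.

Lemma pi_nil : \pi_BrA [::] = 1.
Proof. exact: esym br_oneE. Qed.

Lemma pi_cat u v : \pi_BrA (u ++ v) = \pi_BrA u * \pi_BrA v.
Proof. by rewrite -br_mulE. Qed.

Lemma pi_word_inv u : \pi_BrA (word_inv u) = (\pi_BrA u)^-1.
Proof. by rewrite -br_invE. Qed.

End BraidGroup.

Section BraidGroupRelations.
Variables (n : nat) (A : comPzRingType).
Local Open Scope quotient_scope.
Local Notation G := (BrA n.+1 A).

Definition ygen (c : A) (p : nat) : G := \pi_G [:: y (inord p) c].

Lemma inord_adj_lt p q : (p < n.+1)%N -> (q < n.+1)%N ->
  adj_lt (inord p : node n.+1) (inord q) = nat_adj_lt p q.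
Proof. by move=> pn qn; rewrite /adj_lt /= !inordK. Qed.

Lemma ygen_comm c d p q : (p < n.+1)%N -> (q < n.+1)%N -> nonadjacent p q ->
  commute (ygen c p) (ygen d q).
Proof.
move=> pn qn /andP[pq npq]; rewrite /commute -!pi_cat; apply/pi_br_eq/br_relE.
apply: rel_comm; first by apply: contra pq => /eqP/(congr1 val) /=; rewrite !inordK // => ->.
by rewrite /adjacent !inord_adj_lt.
Qed.

Lemma ygen_braid_lt a b c p q : (p < n.+1)%N -> (q < n.+1)%N -> nat_adj_lt p q ->
  ygen a p * ygen b q * ygen c p = ygen c q * ygen (b + a * c)%R p * ygen a q.
Proof.
move=> pn qn pq; rewrite -!pi_cat; apply/pi_br_eq/br_relE.
by apply: rel_braid; rewrite inord_adj_lt.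
Qed.

Lemma ygen_comm_sq c p : commute (ygen c p) (ygen 0 p ^+ 2).
Proof.
rewrite /commute expg2 -!pi_cat; apply/pi_br_eq/br_relE.
by have := rel_1 (inord p : node n.+1) c 0; rewrite addr0.
Qed.

Lemma pi_embed (w : artin_word n.+1) : \pi_G (embed A w) = word_elt (ygen 0) w.
Proof.
elim: w => [|x w IH]; first by rewrite /word_elt big_nil pi_nil.
rewrite /= -cat1s pi_cat IH /word_elt big_cons; congr (_ * _).
by case: x => k [] /=; rewrite /ygen inord_val // -pi_word_inv.
Qed.

Lemma ygen_braid0 p q : (p < n.+1)%N -> (q < n.+1)%N -> nat_adjacent p q ->
  ygen 0 p * ygen 0 q * ygen 0 p = ygen 0 q * ygen 0 p * ygen 0 q.
Proof.
by move=> pn qn /orP[] pq; [|apply/esym]; rewrite ygen_braid_lt // mul0r addr0.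
Qed.

Lemma ygen_braid_out a p q : (p < n.+1)%N -> (q < n.+1)%N -> nat_adjacent p q ->
  ygen 0 p * ygen 0 q * ygen a p = ygen a q * ygen 0 p * ygen 0 q.
Proof.
move=> pn qn /orP[] pq; first by rewrite ygen_braid_lt // mul0r addr0.
by apply/esym; rewrite ygen_braid_lt // mulr0 addr0.
Qed.

Lemma ygen_braid_mid a p q : (p < n.+1)%N -> (q < n.+1)%N -> nat_adjacent p q ->
  ygen 0 p * ygen a q * ygen 0 p = ygen 0 q * ygen a p * ygen 0 q.
Proof.
by move=> pn qn /orP[] pq; [|apply/esym]; rewrite ygen_braid_lt // mul0r addr0.
Qed.

Lemma pi_ygen c (k : node n.+1) : \pi_G [:: y k c] = ygen c k.
Proof. by rewrite /ygen inord_val. Qed.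

Lemma pi_yratio a (k : node n.+1) :
  \pi_G [:: y k a; yinv k 0] = yratio (ygen 0) (ygen a) k.
Proof. by rewrite /yratio -!pi_ygen -pi_word_inv -pi_cat. Qed.

Lemma ygen_yratio_commute a (k : node n.+1) (w : artin_word n.+1) : (2 < n.+1)%N ->
  droot_act w (simple_droot k) = simple_droot k ->
  commute (yratio (ygen 0) (ygen a) k) (word_elt (ygen 0) w).
Proof.
move=> n2 fix_k; apply: yratio_commute_word fix_k => //.
- exact: ygen_comm.
- exact: ygen_comm.
- exact: ygen_braid0.
- by move=> p _; apply: ygen_comm_sq.
- exact: ygen_braid_out.
- exact: ygen_braid_mid.
Qed.

End BraidGroupRelations.

Theorem lemma3p9 (n : nat) (hn : (3 <= n)%N) (A : comPzRingType)
  (k : node n) (w : artin_word n) (hw : in_PBr w) :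
  (exists w' : artin_word n, forall a : A,
      br_eq (y k a :: embed A w) (embed A w' ++ [:: y k a]))
  /\
  (forall a : A,
      br_eq [:: y k a, yinv k (0 : A) & embed A w]
            (embed A w ++ [:: y k a; yinv k (0 : A)])).
Proof.
case: n hn k w hw => [//|n] hn k w hw.
have k_wf : droot_wf n.+1 (simple_droot k) by apply: simple_droot_wf; [lia | exact: ltn_ord].
split.
  exists ((k, false) :: w ++ [:: (k, true)]) => a; apply/pi_br_eq.
  have := ygen_yratio_commute a hn (droot_act_conj k false true hw k_wf).
  rewrite -[y k a :: _]cat1s !pi_cat !pi_embed !pi_ygen.
  rewrite /word_elt big_cons big_cat big_seq1 /= -/(word_elt _ w) mulgA.
  exact: commute_div_conj.
move=> a; apply/pi_br_eq.
rewrite -[_ :: _ :: _]/([:: y k a; yinv k 0] ++ _) !pi_cat pi_embed pi_yratio.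
exact: ygen_yratio_commute (droot_act_pure hw k_wf).
Qed.
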